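(* Let $\xi_1,\xi_2,\dots$ be an IID sequence of Bernoulli random variables with probability of success $p\in[0,1]$, and let $\hat p_n:=\frac1n\sum_{i=1}^n\xi_i$. For each $\delta>0$ and $n\ge1$ let \[ I_n:=\Bigl\{p'\in[0,1]:\ |p'-\hat p_{\lfloor\!\lfloor n\rfloor\!\rfloor}|<\sqrt{\frac{2\ln\log_2\lfloor\!\lfloor n\rfloor\!\rfloor+\ln\frac{3.3}{\delta}}{2\lfloor\!\lfloor n\rfloor\!\rfloor}}\Bigr\}, \] with the convention $\ln\log_2 1:=\infty$ (so $I_1=[0,1]$). Then $\mathbb{P}(\forall n\ge1:\ p\in I_n)\ge1-\delta$.
   Context: For an integer $n\ge2$, $\lfloor\!\lfloor n\rfloor\!\rfloor$ denotes the largest integer of the form $2^k$, $k\in\{1,2,\dots\}$, with $2^k\le n$; for $n<2$, $\lfloor\!\lfloor n\rfloor\!\rfloor:=1$. $\log_2$ is the binary logarithm. *)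

From HB Require Import structures.
From mathcomp Require Import all_boot all_order all_algebra.
From mathcomp Require Import all_classical all_reals all_analysis.
Set Implicit Arguments. Unset Strict Implicit. Unset Printing Implicit Defensive.
Import Order.TTheory GRing.Theory Num.Theory.
Local Open Scope classical_set_scope.
Local Open Scope ring_scope.

Definition pow2floor (n : nat) : nat :=
  if (n < 2)%N then 1%N else (2 ^ trunc_log 2 n)%N.

Definition mutually_independent {R : realType} {d : measure_display}
  {T : measurableType d} (P : probability T R) (X : nat -> T -> R) : Prop :=
  forall (J : seq nat) (B : nat -> set R), uniq J ->
    (forall j, measurable (B j)) ->
    P (\bigcap_(j in [set j | j \in J]) (X j @^-1` B j)) =
    (\prod_(j <- J) P (X j @^-1` B j))%E.

Definition phat {R : realType} {T : Type} (xi : nat -> T -> R) (n : nat) (w : T) : R :=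
  (\sum_(1 <= i < n.+1) xi i w) / n%:R.

(* the confidence set I_n(w); convention ln log2 1 = +oo, so I_1 = [0,1] *)
Definition conf_set {R : realType} {T : Type} (xi : nat -> T -> R) (delta : R)
    (n : nat) (w : T) : set R :=
  let N := pow2floor n in
  [set p' | 0 <= p' <= 1 /\
     (N = 1%N \/
      `|p' - phat xi N w| <
        Num.sqrt ((2 * ln (ln (N%:R) / ln 2) + ln ((33 / 10) / delta)) / (2 * N%:R)))].

(* Hoeffding's inequality bounds the probability that the empirical mean of the
   first N trials deviates from p by at least r by 2 exp(-2 N r^2).  The radius
   of I_n only changes at the dyadic scales N = 2^(k+1), where it is chosen so
   that this bound equals delta / (1.65 (k+1)^2); since sum_k 1/(k+1)^2 <= 1.65,
   a union bound over the scales shows that p leaves some I_n with probability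
   at most delta.  Hoeffding's inequality is obtained by Chernoff's method on the
   finite space of outcomes of the first N trials, from Hoeffding's lemma
   1 - p + p e^t <= e^(p t + t^2/8). *)

From HB Require Import structures.
From mathcomp Require Import all_boot all_order all_algebra.
From mathcomp Require Import all_classical all_reals all_analysis.
From mathcomp Require Import measurable_realfun ring lra.
Import Order.TTheory GRing.Theory Num.Theory numFieldNormedType.Exports.
Local Open Scope classical_set_scope.
Local Open Scope ring_scope.

Section hoeffding.
Context {R : realType}.

Lemma ler0_is_derive_nincry (f df : R -> R) (a : R) :
  (forall x, is_derive x (1 : R) f (df x)) -> (forall x, a <= x -> df x <= 0) ->
  forall x y, a <= x -> x <= y -> f y <= f x.
Proof.
move=> f_df df_le0; apply: ler0_derive1_nincry.
- by move=> x _; case: (f_df x).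
- move=> x; rewrite in_itv /= andbT => /ltW ax.
  by rewrite derive1E; have [_ ->] := f_df x; exact: df_le0.
- apply: continuous_subspaceT => x.
  by apply/differentiable_continuous/derivable1_diffP; case: (f_df x).
Qed.

Variable p : R.
Hypothesis p01 : 0 <= p <= 1.

Let L (s : R) : R := 1 - p + p * expR s.

Let L_gt0 s : 0 < L s.
Proof. by case/andP: p01 => p0 p1; have := expR_gt0 s; rewrite /L; nra. Qed.

Let is_derive_pexpR s : is_derive s (1 : R) (fun z => p * expR z) (p * expR s).
Proof. exact: is_deriveZ. Qed.

Let is_derive_L s : is_derive s (1 : R) L (p * expR s).
Proof.
by have := is_deriveD (is_derive_cst (1 - p) s 1) (is_derive_pexpR s); rewrite add0r.
Qed.

(* [(ln L)' = p e^s / L] and [(ln L)'' = (p e^s / L) (1 - p e^s / L) <= 1/4],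
   so [(ln L)' - s/4] is nonincreasing. *)
Lemma bernoulli_logmgf_slope_le s : 0 <= s -> p * expR s / L s <= p + s / 4.
Proof.
move=> s0; pose K z := (L z)^-1 * (p * expR z) - 4^-1 * z.
have K_deriv z : is_derive z (1 : R) K ((L z)^-1 *: (p * expR z)
    + (p * expR z) *: (- (L z) ^- 2 *: (p * expR z)) - 4^-1 *: 1).
  apply: is_deriveB (is_deriveZ _ (is_derive_id z 1)).
  exact: is_deriveM (is_deriveV (lt0r_neq0 (L_gt0 z)) (is_derive_L z)) _.
have K0 : K 0 = p by rewrite /K /L expR0 mulr1 subrK invr1 mul1r mulr0 subr0.
suff : K s <= K 0 by rewrite K0 /K mulrC [_ * s]mulrC; lra.
apply: (ler0_is_derive_nincry _ _ 0 K_deriv) => // z _.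
have Lz0 : L z != 0 by exact: lt0r_neq0.
have -> : (L z)^-1 *: (p * expR z) + (p * expR z) *: (- (L z) ^- 2 *: (p * expR z))
    - 4^-1 *: (1 : R) = - ((L z - 2 * (p * expR z)) / (2 * L z)) ^+ 2.
  by rewrite /GRing.scale /=; field.
by rewrite oppr_le0 sqr_ge0.
Qed.

Lemma hoeffding_lemma t : 0 <= t -> 1 - p + p * expR t <= expR (p * t + t ^+ 2 / 8).
Proof.
move=> t0; pose G z := ln (L z) - (p * z + 8^-1 * z ^+ 2).
have G_deriv z : is_derive z (1 : R) G
    ((L z)^-1 * (p * expR z) - (p *: 1 + 8^-1 *: ((2%:R * z ^+ 1) *: 1))).
  apply: is_deriveB (is_derive1_comp (is_derive1_ln (L_gt0 z)) (is_derive_L z)) _.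
  exact: is_deriveD (is_deriveZ _ (is_derive_id z 1))
                    (is_deriveZ _ (is_deriveX 2 (is_derive_id z 1))).
have G0 : G 0 = 0 by rewrite /G /L expR0 mulr1 subrK ln1 mulr0 expr0n mulr0 addr0 subr0.
have : G t <= G 0.
  apply: (ler0_is_derive_nincry _ _ 0 G_deriv) => // z z0.
  have := bernoulli_logmgf_slope_le _ z0; rewrite /GRing.scale /= expr1 mulrC; lra.
rewrite G0 /G subr_le0 [_ / 8]mulrC -ler_expR lnK //; exact: L_gt0.
Qed.

End hoeffding.

Section bernoulli_tails.
Context {R : realType} {N : nat}.
Local Notation outcome := {ffun 'I_N -> bool}.
Implicit Types (q t e : R) (x : bool) (b : outcome).

Definition bern_prob q x b : R := \prod_(i < N) (if b i == x then q else 1 - q).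

Definition hits x b : R := \sum_(i < N) (b i == x)%:R.

Lemma bern_prob_ge0 q x b : 0 <= q <= 1 -> 0 <= bern_prob q x b.
Proof. by case/andP=> q0 q1; apply: prodr_ge0 => i _; case: ifP => _; lra. Qed.

Lemma bern_mgf q x t :
  \sum_(b : outcome) bern_prob q x b * expR (t * hits x b) =
  (1 - q + q * expR t) ^+ N.
Proof.
pose F (i : 'I_N) (y : bool) := if y == x then q * expR t else 1 - q.
have -> : \sum_(b : outcome) bern_prob q x b * expR (t * hits x b) =
           \sum_(b : outcome) \prod_i F i (b i).
  apply: eq_bigr => b _; rewrite mulr_sumr expR_sum -big_split /=.
  by apply: eq_bigr => i _; rewrite /F; case: eqP; rewrite ?mulr1 ?mulr0 ?expR0 ?mulr1.
rewrite -(bigA_distr_bigA F) (eq_bigr (fun _ => 1 - q + q * expR t)).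
  by rewrite prodr_const card_ord.
by move=> i _; rewrite big_bool /F; case: x {F} => /=; rewrite addrC.
Qed.

(* Chernoff's method, with the exponent [t = 4 e] that optimizes Hoeffding's lemma. *)
Lemma bern_upper_tail q x e : (0 < N)%N -> 0 <= q <= 1 -> 0 <= e ->
  \sum_(b : outcome | q + e <= hits x b / N%:R) bern_prob q x b
    <= expR (- (2 * N%:R * e ^+ 2)).
Proof.
move=> N_gt0 q01 e0; have N_pos : 0 < N%:R :> R by rewrite ltr0n.
pose t := 4 * e; pose c := t * (N%:R * (q + e)).
have t0 : 0 <= t by rewrite /t; lra.
have markov : \sum_(b : outcome | q + e <= hits x b / N%:R) bern_prob q x b
    <= \sum_(b : outcome) bern_prob q x b * expR (t * hits x b) * expR (- c).
  rewrite big_mkcond /=; apply: ler_sum => b _.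
  have w0 := bern_prob_ge0 _ x b q01.
  case: ifP => hb; last by rewrite !mulr_ge0 ?expR_ge0.
  rewrite -mulrA -expRD -[X in X <= _]mulr1 ler_wpM2l // -expR0 ler_expR subr_ge0.
  by rewrite /c ler_wpM2l // -ler_pdivlMl // mulrC.
apply: (le_trans markov); rewrite -mulr_suml bern_mgf.
have mgf_le : (1 - q + q * expR t) ^+ N <= expR (q * t + t ^+ 2 / 8) ^+ N.
  apply: lerXn2r; rewrite ?nnegrE ?expR_ge0 ?hoeffding_lemma //.
  by case/andP: q01 => q0 q1; have := expR_ge0 t; nra.
apply: le_trans (ler_wpM2r (expR_ge0 _) mgf_le) _.
by rewrite -expRM_natl -expRD ler_expR /c /t; nra.
Qed.

Lemma hits_negb b : hits false b = N%:R - hits true b.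
Proof.
rewrite /hits -[N in N%:R]card_ord -sumr_const -sumrB.
by apply: eq_bigr => i _; case: (b i); rewrite ?subrr ?subr0.
Qed.

Lemma bern_prob_negb q b : bern_prob (1 - q) false b = bern_prob q true b.
Proof. by apply: eq_bigr => i _; case: (b i); rewrite //= opprB addrC subrK. Qed.

(* The lower tail for [true] is the upper tail for [false], of probability [1 - q]. *)
Lemma bern_two_sided_tail q e : (0 < N)%N -> 0 <= q <= 1 -> 0 <= e ->
  \sum_(b : outcome | e <= `|q - hits true b / N%:R|) bern_prob q true b
    <= 2 * expR (- (2 * N%:R * e ^+ 2)).
Proof.
move=> N_gt0 q01 e0; have N_pos : 0 < N%:R :> R by rewrite ltr0n.
have q'01 : 0 <= 1 - q <= 1 by case/andP: q01 => ? ?; apply/andP; split; lra.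
rewrite mulr2n mulrDl mul1r.
apply: le_trans (lerD (bern_upper_tail _ true _ N_gt0 q01 e0)
                      (bern_upper_tail _ false _ N_gt0 q'01 e0)).
rewrite [X in _ <= X + _]big_mkcond [X in _ <= _ + X]big_mkcond -big_split /=.
rewrite big_mkcond; apply: ler_sum => b _.
rewrite bern_prob_negb hits_negb mulrBl divff ?lt0r_neq0 //.
have w0 := bern_prob_ge0 _ true b q01.
case: ifP => [|_]; last by case: ifP; case: ifP; lra.
rewrite ler_normr => /orP[]; case: ifP; case: ifP; lra.
Qed.

End bernoulli_tails.

Section inverse_squares.
Context {R : realType}.

Let S n : R := \sum_(k < n) ((k.+1)%:R ^+ 2)^-1.

Let S_nondecr : nondecreasing_seq S.
Proof.
apply/nondecreasing_seqP => n; rewrite /S big_ord_recr /= lerDl invr_ge0; exact: sqr_ge0.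
Qed.

(* [1/(n+1)^2 <= 2/(2n+1) - 2/(2n+3)]; the resulting bound [S 2 + 2/5] is [33/20]. *)
Let S_tail_nonincr : nonincreasing_seq (fun n => S n + 2 / (2 * n%:R + 1)).
Proof.
apply/nonincreasing_seqP => n; rewrite /S big_ord_recr /= -addrA lerD2l -natr1.
have n0 : (0 : R) <= n%:R by rewrite ler0n.
rewrite -subr_ge0.
have -> : 2 / (2 * n%:R + 1) - (((n%:R + 1) ^+ 2)^-1 + 2 / (2 * (n%:R + 1) + 1))
    = ((n%:R + 1) ^+ 2 * (2 * n%:R + 1) * (2 * n%:R + 3))^-1 :> R.
  by field; apply/and3P; split; apply: lt0r_neq0; lra.
by rewrite invr_ge0 !mulr_ge0 ?sqr_ge0 //; lra.
Qed.

Lemma sum_inv_sqr_le n : \sum_(k < n) ((k.+1)%:R ^+ 2)^-1 <= 33 / 20 :> R.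
Proof.
have S_le_S_tail m : S m <= S m + 2 / (2 * m%:R + 1).
  by rewrite lerDl divr_ge0 // addr_ge0 // mulr_ge0.
apply: le_trans (S_nondecr _ _ (leq_maxl n 2)) _.
apply: le_trans (S_le_S_tail _) _.
apply: le_trans (S_tail_nonincr _ _ (leq_maxr n 2)) _.
rewrite /S !big_ord_recr big_ord0 /=.
by rewrite (_ : 2 * 2%:R + 1 = 5 :> R); [lra | ring].
Qed.

End inverse_squares.

Lemma measure_bigsetU_le {d} {R : realType} {T : ringOfSetsType d}
    (mu : {content set T -> \bar R}) {I : Type} (s : seq I) (Q : pred I)
    (F : I -> set T) : (forall i, measurable (F i)) ->
  (mu (\big[setU/set0]_(i <- s | Q i) F i) <= \sum_(i <- s | Q i) mu (F i))%E.
Proof.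
move=> mF; elim: s => [|i s IH]; first by rewrite !big_nil measure0.
rewrite !big_cons; case: ifP => _ //.
apply: le_trans (measureU2 _ _ _) (leeD _ IH) => //.
exact: bigsetU_measurable.
Qed.

Section bernoulli_process.
Context {R : realType} {d : measure_display} {T : measurableType d}.
Variables (P : probability T R) (xi : nat -> T -> R) (p : R).
Hypotheses (p01 : 0 <= p <= 1) (xi_meas : forall i, measurable_fun setT (xi i)).
Hypothesis xi1 : forall i, P [set w | xi i w = 1] = p%:E.
Hypothesis xi0 : forall i, P [set w | xi i w = 0] = (1 - p)%:E.
Hypothesis xi_indep : mutually_independent P xi.

Let xi_set1 j (x : R) : measurable [set w | xi j w = x].
Proof. by rewrite -[X in measurable X]setTI; exact: xi_meas (measurable_set1 x). Qed.

(* [b i] prescribes the value of [xi i.+1]: the trials are numbered from 1. *)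
Definition bern_cylinder {N} (b : {ffun 'I_N.+1 -> bool}) : set T :=
  \bigcap_(j in [set j | j \in iota 1 N.+1]) (xi j @^-1` [set (b (inord j.-1) : nat)%:R]).

Lemma prob_bern_cylinder N (b : {ffun 'I_N.+1 -> bool}) :
  P (bern_cylinder b) = (bern_prob p true b)%:E.
Proof.
rewrite /bern_cylinder xi_indep; last 2 first.
- exact: iota_uniq.
- by move=> j; exact: measurable_set1.
have -> : iota 1 N.+1 = map (addn 1) (iota 0 N.+1) by rewrite -iotaDl.
rewrite big_map -/(index_iota 0 N.+1) big_mkord -prodEFin.
apply: eq_bigr => i _; rewrite add1n /= inord_val.
by case: (b i); [exact: xi1 | exact: xi0].
Qed.

Definition off_support : set T := \bigcup_j [set w | xi j w <> 0 /\ xi j w <> 1].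

Let off_support_at j : set T := [set w | xi j w <> 0 /\ xi j w <> 1].

Let off_support_atE j :
  off_support_at j = ~` ([set w | xi j w = 0] `|` [set w | xi j w = 1]).
Proof. by apply/seteqP; split => w /=; [move=> [? ?] [] | move/not_orP]. Qed.

Let measurable_off_support_at j : measurable (off_support_at j).
Proof. by rewrite off_support_atE; apply/measurableC/measurableU; exact: xi_set1. Qed.

Let prob_off_support_at j : P (off_support_at j) = 0%E.
Proof.
have disj : [set w | xi j w = 0] `&` [set w | xi j w = 1] = set0.
  by apply/seteqP; split => w //= [-> /eqP]; rewrite eq_sym oner_eq0.
rewrite off_support_atE probability_setC; last exact: measurableU.
rewrite measureU // [X in (_ - (X + _))%E]xi0 [X in (_ - (_ + X))%E]xi1.
by rewrite -EFinD subrK subrr.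
Qed.

Lemma measurable_off_support : measurable off_support.
Proof. exact: bigcupT_measurable. Qed.

Lemma prob_off_support : P off_support = 0%E.
Proof.
apply/eqP; rewrite -measure_le0.
apply: le_trans (measure_sigma_subadditive P measurable_off_support_at
  measurable_off_support (fun w hw => hw)) _.
by rewrite eseries0 // => j _ _; exact: prob_off_support_at.
Qed.

Lemma phat_hits N w : ~ off_support w ->
  let b := [ffun i : 'I_N.+1 => xi i.+1 w == 1] in
  w \in bern_cylinder b /\ phat xi N.+1 w = hits true b / N.+1%:R.
Proof.
move=> w_in b.
have xi01 j : xi j w = ((xi j w == 1) : nat)%:R.
  have [-> //|xi_n1] := eqVneq (xi j w) 1.
  have [-> //|xi_n0] := eqVneq (xi j w) 0.
  by case: w_in; exists j; split; apply/eqP.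
split.
  rewrite inE => j; rewrite mksetE mem_iota add1n ltnS => /andP[j_gt0 j_le].
  by rewrite ffunE inordK prednK // ?xi01.
rewrite /phat /hits big_add1 /= big_mkord; congr (_ / _).
by apply: eq_bigr => i _; rewrite ffunE eqb_id -xi01.
Qed.

Lemma deviation_sub N e :
  [set w | e <= `|p - phat xi N.+1 w|] `<=`
  off_support `|`
  \big[setU/set0]_(b : {ffun 'I_N.+1 -> bool} | e <= `|p - hits true b / N.+1%:R|)
    bern_cylinder b.
Proof.
move=> w dev; case: (pselect (off_support w)) => [|w_in]; [by left | right].
have [w_b phatE] := phat_hits N w w_in.
by rewrite (bigD1 [ffun i : 'I_N.+1 => xi i.+1 w == 1]) -?phatE //=; left; rewrite -inE.
Qed.

Lemma measurable_deviation N e : measurable [set w | e <= `|p - phat xi N w|].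
Proof.
have -> : [set w | e <= `|p - phat xi N w|] =
    (fun w => `|p - phat xi N w|) @^-1` `[e, +oo[.
  by apply/seteqP; split => w /=; rewrite in_itv /= andbT.
rewrite -[X in measurable X]setTI; apply: measurableT_comp => //.
apply: measurable_funB => //; apply: measurable_funM => //.
exact: measurable_sum.
Qed.

Lemma deviation_prob_le N e : 0 <= e ->
  (P [set w | (e <= `|p - phat xi N.+1 w|)%R]
    <= (2 * expR (- (2 * N.+1%:R * e ^+ 2)))%:E)%E.
Proof.
move=> e0.
have cyl_meas (b : {ffun 'I_N.+1 -> bool}) : measurable (bern_cylinder b).
  by apply: bigcap_measurableType => j _; exact: xi_set1.
apply: le_trans (le_measure _ _ _ (deviation_sub N e)) _.
- by rewrite inE; exact: measurable_deviation.
- by rewrite inE; apply: measurableU measurable_off_support _; exact: bigsetU_measurable.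
apply: le_trans (measureU2 _ measurable_off_support _) _.
  exact: bigsetU_measurable.
rewrite [X in (X + _)%E]prob_off_support add0e.
apply: le_trans (measure_bigsetU_le P _ _ _ cyl_meas) _.
rewrite (eq_bigr (fun b => (bern_prob p true b)%:E)); last first.
  by move=> b _; exact: prob_bern_cylinder.
by rewrite sumEFin lee_fin bern_two_sided_tail.
Qed.

End bernoulli_process.


Lemma pow2floor_expS k : pow2floor (2 ^ k.+1) = (2 ^ k.+1)%N.
Proof.
rewrite /pow2floor trunc_expnK // ifF //.
by apply/negbTE; rewrite -leqNgt expnS leq_pmulr // expn_gt0.
Qed.

Lemma pow2floorP n : pow2floor n = 1%N \/ exists k, pow2floor n = (2 ^ k.+1)%N.
Proof.
rewrite /pow2floor; case: ltnP => n2; [by left | right].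
by exists (trunc_log 2 n).-1; rewrite prednK // trunc_log_gt0.
Qed.

Section confidence_radius.
Context {R : realType}.

Definition conf_radius (delta : R) (N : nat) : R :=
  Num.sqrt ((2 * ln (ln N%:R / ln 2) + ln ((33 / 10) / delta)) / (2 * N%:R)).

Lemma conf_set_dyadicE {T : Type} (xi : nat -> T -> R) (delta p : R) :
  0 <= p <= 1 ->
  [set w | forall n, (1 <= n)%N -> conf_set xi delta n w p] =
  ~` \bigcup_k [set w | conf_radius delta (2 ^ k.+1) <= `|p - phat xi (2 ^ k.+1) w|].
Proof.
move=> p01; apply/seteqP; split => w /=.
- move=> conf [k _ /=]; apply/negP; rewrite -ltNge.
  have := conf _ (expn_gt0 2 k.+1); rewrite /conf_set pow2floor_expS /=.
  by case=> _ [/eqP|//]; rewrite expnS muln_eq1.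
- move=> not_dev n _; split => //.
  have [->|[k ->]] := pow2floorP n; [by left | right].
  by rewrite ltNge; apply/negP => dev; apply: not_dev; exists k.
Qed.

Lemma conf_radius_tail (delta : R) k : 0 < delta <= 33 / 10 ->
  2 * expR (- (2 * (2 ^ k.+1)%:R * conf_radius delta (2 ^ k.+1) ^+ 2)) =
  (20 / 33 * delta) / (k.+1%:R ^+ 2).
Proof.
case/andP=> delta_gt0 delta_le.
set N := (2 ^ k.+1)%N; set m : R := k.+1%:R; set a : R := 33 / 10 / delta.
have N_gt0 : 0 < N%:R :> R by rewrite ltr0n expn_gt0.
have m_gt0 : 0 < m by rewrite ltr0n.
have a_ge1 : 1 <= a by rewrite ler_pdivlMr // mul1r.
have log2N : ln N%:R / ln 2 = m.
  by rewrite /N natrX lnXn // mulrnAl divff // gt_eqF // ln_gt0 // ltr1n.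
rewrite /conf_radius log2N -/a sqr_sqrtr; last first.
  by rewrite divr_ge0 ?addr_ge0 ?mulr_ge0 ?ln_ge0 // ?ler1n // ltW.
rewrite [2 * N%:R * _]mulrC divfK ?gt_eqF ?mulr_gt0 //.
rewrite opprD expRD !expRN expRM_natl !lnK ?posrE //; last exact: lt_le_trans a_ge1.
rewrite /a; field.
by apply/andP; split; rewrite gt_eqF.
Qed.

End confidence_radius.

Lemma measure_bigcup_inv_sqr_le {d} {R : realType} {T : measurableType d}
    (mu : {measure set T -> \bar R}) (B : nat -> set T) (c : R) :
  (forall k, measurable (B k)) -> 0 <= c ->
  (forall k, mu (B k) <= (c / k.+1%:R ^+ 2)%:E)%E ->
  (mu (\bigcup_k B k) <= (33 / 20 * c)%:E)%E.
Proof.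
move=> B_meas c0 B_le.
have U_meas : measurable (\bigcup_k B k) by exact: bigcupT_measurable.
apply: le_trans (measure_sigma_subadditive mu B_meas U_meas (fun w Bw => Bw)) _.
apply: le_trans (lee_nneseries (fun k _ _ => measure_ge0 _ _) (fun k _ => B_le k)) _.
apply: lime_le.
  by apply: is_cvg_nneseries => k _; rewrite lee_fin divr_ge0 // sqr_ge0.
apply: nearW => n; rewrite sumEFin lee_fin -mulr_sumr big_mkord mulrC.
by rewrite ler_wpM2r // sum_inv_sqr_le.
Qed.

Theorem proposition2 (R : realType) (d : measure_display) (T : measurableType d)
  (P : probability T R) (xi : nat -> T -> R) (p delta : R) :
  0 <= p <= 1 ->
  (forall i, measurable_fun setT (xi i)) ->
  (forall i, P [set w | xi i w = 1] = p%:E) ->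
  (forall i, P [set w | xi i w = 0] = (1 - p)%:E) ->
  mutually_independent P xi ->
  0 < delta ->
  ((1 - delta)%:E <= P [set w | forall n, (1 <= n)%N -> conf_set xi delta n w p])%E.
Proof.
move=> p01 xi_meas xi1 xi0 xi_indep delta_gt0.
have [delta_le1|delta_gt1] := lerP delta 1; last first.
  by apply: le_trans (measure_ge0 _ _); rewrite lee_fin subr_le0 ltW.
pose dev k := [set w | conf_radius delta (2 ^ k.+1) <= `|p - phat xi (2 ^ k.+1) w|].
have dev_meas k : measurable (dev k) by exact: measurable_deviation.
have dev_le k : (P (dev k) <= (20 / 33 * delta / k.+1%:R ^+ 2)%:E)%E.
  rewrite -conf_radius_tail; last by apply/andP; split => //; lra.
  have := deviation_prob_le P xi p p01 xi_meas xi1 xi0 xi_indep (2 ^ k.+1).-1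
    (conf_radius delta (2 ^ k.+1)) (sqrtr_ge0 _).
  by rewrite prednK // expn_gt0.
have union_le : (P (\bigcup_k dev k) <= delta%:E)%E.
  have c0 : 0 <= 20 / 33 * delta by lra.
  apply: le_trans (measure_bigcup_inv_sqr_le P _ _ dev_meas c0 dev_le) _.
  by rewrite lee_fin; lra.
rewrite conf_set_dyadicE // probability_setC; last exact: bigcupT_measurable.
by rewrite EFinB leeB.
Qed.
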